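(* Let $\alpha,\beta,\lambda,\varepsilon_1,\varepsilon_2$ be positive real numbers and consider the planar system $$s'=s\big(\varepsilon_2-\beta-\varepsilon_2 s+(\varepsilon_1-\varepsilon_2-\lambda)i\big),\qquad i'=i\big(\varepsilon_2-\varepsilon_1-\alpha+(\lambda-\varepsilon_2)s+(\varepsilon_1-\varepsilon_2)i\big)$$ on $D_1=\{(s,i): s\ge0,\ i\ge0,\ s+i\le1\}$, with interior $\overset{o}{D}_1$. Define $$T_0=\varepsilon_2-\beta,\quad T_1=\varepsilon_2-\varepsilon_1-\alpha,\quad T_2=\varepsilon_2-\beta+\frac{(\varepsilon_1-\varepsilon_2-\lambda)(\varepsilon_2-\varepsilon_1-\alpha)}{\varepsilon_2-\varepsilon_1},\quad T_3=\varepsilon_2-\varepsilon_1-\alpha-\frac{(\varepsilon_2-\lambda)(\varepsilon_2-\beta)}{\varepsilon_2}.$$ If $T_0>0$, $T_1>0$, $T_2<0$ and $T_3<0$, then the system has a saddle point in $\overset{o}{D}_1$.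
   Context: Note $T_1>0$ implies $\varepsilon_2\neq\varepsilon_1$, so $T_2$ is defined. A saddle point is a rest point at which some eigenvalues of the linearization have positive real parts and the others negative real parts. This is the special case $b=\beta_1=\gamma=0$ (with $\beta=\beta_2$) of the SIRS proportions system reduced to the $(s,i)$-plane. *)

From Stdlib Require Import Reals Lra.
From Coquelicot Require Import Coquelicot.
Open Scope R_scope.

Definition vf_s (alpha beta lambda eps1 eps2 : R) (s i : R) : R :=
  s * (eps2 - beta - eps2 * s + (eps1 - eps2 - lambda) * i).
Definition vf_i (alpha beta lambda eps1 eps2 : R) (s i : R) : R :=
  i * (eps2 - eps1 - alpha + (lambda - eps2) * s + (eps1 - eps2) * i).

Definition interior_D1 (s i : R) : Prop := 0 < s /\ 0 < i /\ s + i < 1.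

Definition rest_point (F G : R -> R -> R) (s i : R) : Prop :=
  F s i = 0 /\ G s i = 0.

Definition jac11 (F : R -> R -> R) (s i : R) : R := Derive (fun x => F x i) s.
Definition jac12 (F : R -> R -> R) (s i : R) : R := Derive (fun y => F s y) i.

Definition lin_eigenvalue (F G : R -> R -> R) (s i : R) (z : C) : Prop :=
  ((RtoC (jac11 F s i) - z) * (RtoC (jac12 G s i) - z)
   - RtoC (jac12 F s i) * RtoC (jac11 G s i))%C = RtoC 0.

Definition saddle_point (F G : R -> R -> R) (s i : R) : Prop :=
  rest_point F G s i /\
  (exists z, lin_eigenvalue F G s i z /\ 0 < Re z) /\
  (exists z, lin_eigenvalue F G s i z /\ Re z < 0) /\
  (forall z, lin_eigenvalue F G s i z -> Re z <> 0).

(* The system is of Lotka-Volterra type: each equation is the population times an affine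
   per-capita rate.  At a coexistence rest point (s, i) the Jacobian is
   diag(s, i) times the interaction matrix A, so its determinant is s i det A, and a
   negative determinant forces one positive and one negative real eigenvalue.  With
   Cramer's rule the rest point is (Ns / det A, Ni / det A), where T2 < 0 and T3 < 0 say
   exactly that Ns < 0 and Ni < 0; the identity r1 det A = -(a11 Ns + a12 Ni) then gives
   det A < 0, hence s, i > 0.  Finally, subtracting the two rate equations gives
   lambda (s + i) = T0 - T1, which T2 < 0 bounds by lambda. *)
From Stdlib Require Import Reals Lra Psatz.
From Coquelicot Require Import Coquelicot.
Open Scope R_scope.

Definition jac_tr (F G : R -> R -> R) (s i : R) : R := jac11 F s i + jac12 G s i.

Definition jac_det (F G : R -> R -> R) (s i : R) : R :=
  jac11 F s i * jac12 G s i - jac12 F s i * jac11 G s i.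

Lemma quadratic_opposite_roots (t d : R) :
  d < 0 -> exists x y, 0 < x /\ y < 0 /\ x * x - t * x + d = 0 /\ y * y - t * y + d = 0.
Proof.
  intros Hd.
  remember (t * t - 4 * d) as disc eqn:Edisc.
  assert (Hdisc : 0 < disc) by nra.
  assert (Hsq : sqrt disc * sqrt disc = disc) by (apply sqrt_sqrt; lra).
  assert (Hpos : 0 < sqrt disc) by (apply sqrt_lt_R0; lra).
  assert (Ht : t < sqrt disc) by nra.
  assert (Ht' : - t < sqrt disc) by nra.
  exists ((t + sqrt disc) / 2), ((t - sqrt disc) / 2).
  repeat split; try lra; nra.
Qed.

Lemma lin_eigenvalue_real (F G : R -> R -> R) (s i x : R) :
  x * x - jac_tr F G s i * x + jac_det F G s i = 0 -> lin_eigenvalue F G s i (RtoC x).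
Proof.
  unfold jac_tr, jac_det, lin_eigenvalue, RtoC; intros H.
  apply injective_projections; simpl; [lra | ring].
Qed.

Lemma lin_eigenvalue_Re_neq0 (F G : R -> R -> R) (s i : R) (z : C) :
  jac_det F G s i < 0 -> lin_eigenvalue F G s i z -> Re z <> 0.
Proof.
  unfold jac_det, lin_eigenvalue, RtoC, Re; destruct z as [x y]; simpl.
  intros Hdet Heig Hx; subst x.
  apply (f_equal fst) in Heig; simpl in Heig.
  nra.
Qed.

Lemma saddle_point_of_jac_det_neg (F G : R -> R -> R) (s i : R) :
  rest_point F G s i -> jac_det F G s i < 0 -> saddle_point F G s i.
Proof.
  intros Hrest Hdet.
  destruct (quadratic_opposite_roots (jac_tr F G s i) _ Hdet)
    as (x & y & Hx & Hy & Hxroot & Hyroot).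
  split; [exact Hrest | split; [| split]].
  - exists (RtoC x); split; [now apply lin_eigenvalue_real | exact Hx].
  - exists (RtoC y); split; [now apply lin_eigenvalue_real | exact Hy].
  - intros z; now apply lin_eigenvalue_Re_neq0.
Qed.

Section LotkaVolterra.

Variables r1 r2 a11 a12 a21 a22 : R.
Variables F G : R -> R -> R.
Hypothesis F_eq : forall s i, F s i = s * (r1 + a11 * s + a12 * i).
Hypothesis G_eq : forall s i, G s i = i * (r2 + a21 * s + a22 * i).

Lemma jac11_lv_F (s i : R) : jac11 F s i = r1 + 2 * a11 * s + a12 * i.
Proof.
  unfold jac11; rewrite (Derive_ext _ (fun x => x * (r1 + a11 * x + a12 * i)))
    by (intro; apply F_eq).
  apply is_derive_unique; auto_derive; auto; ring.
Qed.

Lemma jac12_lv_F (s i : R) : jac12 F s i = a12 * s.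
Proof.
  unfold jac12; rewrite (Derive_ext _ (fun y => s * (r1 + a11 * s + a12 * y)))
    by (intro; apply F_eq).
  apply is_derive_unique; auto_derive; auto; ring.
Qed.

Lemma jac11_lv_G (s i : R) : jac11 G s i = a21 * i.
Proof.
  unfold jac11; rewrite (Derive_ext _ (fun x => i * (r2 + a21 * x + a22 * i)))
    by (intro; apply G_eq).
  apply is_derive_unique; auto_derive; auto; ring.
Qed.

Lemma jac12_lv_G (s i : R) : jac12 G s i = r2 + a21 * s + 2 * a22 * i.
Proof.
  unfold jac12; rewrite (Derive_ext _ (fun y => y * (r2 + a21 * s + a22 * y)))
    by (intro; apply G_eq).
  apply is_derive_unique; auto_derive; auto; ring.
Qed.

Section Coexistence.

Variables s i : R.
Hypothesis rate_s : r1 + a11 * s + a12 * i = 0.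
Hypothesis rate_i : r2 + a21 * s + a22 * i = 0.

Lemma lv_rest_point : rest_point F G s i.
Proof. unfold rest_point; rewrite F_eq, G_eq, rate_s, rate_i; split; ring. Qed.

Lemma lv_jac_det : jac_det F G s i = s * i * (a11 * a22 - a12 * a21).
Proof.
  unfold jac_det; rewrite jac11_lv_F, jac12_lv_F, jac11_lv_G, jac12_lv_G.
  replace (r1 + 2 * a11 * s + a12 * i) with (a11 * s) by lra.
  replace (r2 + a21 * s + 2 * a22 * i) with (a22 * i) by lra.
  ring.
Qed.

End Coexistence.

Lemma lv_coexistence_saddle :
  0 < r1 -> a11 < 0 -> a12 < 0 ->
  a12 * r2 - a22 * r1 < 0 -> a21 * r1 - a11 * r2 < 0 ->
  exists s i, 0 < s /\ 0 < i /\
    r1 + a11 * s + a12 * i = 0 /\ r2 + a21 * s + a22 * i = 0 /\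
    saddle_point F G s i.
Proof.
  intros Hr1 Ha11 Ha12 HNs HNi.
  set (det := a11 * a22 - a12 * a21).
  set (Ns := a12 * r2 - a22 * r1) in *; set (Ni := a21 * r1 - a11 * r2) in *.
  assert (Hdet_id : r1 * det = - (a11 * Ns + a12 * Ni)) by (unfold det, Ns, Ni; ring).
  assert (Hdet : det < 0) by nra.
  exists (Ns / det), (Ni / det).
  assert (rate_s : r1 + a11 * (Ns / det) + a12 * (Ni / det) = 0)
    by (unfold Ns, Ni, det in *; field; lra).
  assert (rate_i : r2 + a21 * (Ns / det) + a22 * (Ni / det) = 0)
    by (unfold Ns, Ni, det in *; field; lra).
  assert (Hs : 0 < Ns / det)
    by (replace (Ns / det) with (- Ns / - det) by (field; lra); apply Rdiv_lt_0_compat; lra).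
  assert (Hi : 0 < Ni / det)
    by (replace (Ni / det) with (- Ni / - det) by (field; lra); apply Rdiv_lt_0_compat; lra).
  do 4 (split; [assumption |]).
  apply saddle_point_of_jac_det_neg; [now apply lv_rest_point |].
  rewrite lv_jac_det by assumption; fold det.
  assert (0 < Ns / det * (Ni / det)) by nra; nra.
Qed.

End LotkaVolterra.

Theorem proposition3p2 (alpha beta lambda eps1 eps2 : R) :
  0 < alpha -> 0 < beta -> 0 < lambda -> 0 < eps1 -> 0 < eps2 ->
  let T0 := eps2 - beta in
  let T1 := eps2 - eps1 - alpha in
  let T2 := eps2 - beta
            + (eps1 - eps2 - lambda) * (eps2 - eps1 - alpha) / (eps2 - eps1) in
  let T3 := eps2 - eps1 - alpha - (eps2 - lambda) * (eps2 - beta) / eps2 in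
  T0 > 0 -> T1 > 0 -> T2 < 0 -> T3 < 0 ->
  exists s i : R,
    interior_D1 s i /\
    saddle_point (vf_s alpha beta lambda eps1 eps2)
                 (vf_i alpha beta lambda eps1 eps2) s i.
Proof.
  intros Hal Hb Hl He1 He2 T0 T1 T2 T3 H0 H1 H2 H3.
  assert (Hgap : 0 < eps2 - eps1) by (unfold T1 in H1; lra).
  assert (HNs : (eps1 - eps2 - lambda) * T1 - (eps1 - eps2) * T0 = (eps2 - eps1) * T2)
    by (unfold T0, T1, T2; field; lra).
  assert (HNi : (lambda - eps2) * T0 - - eps2 * T1 = eps2 * T3)
    by (unfold T0, T1, T3; field; lra).
  destruct (lv_coexistence_saddle T0 T1 (- eps2) (eps1 - eps2 - lambda)
              (lambda - eps2) (eps1 - eps2)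
              (vf_s alpha beta lambda eps1 eps2) (vf_i alpha beta lambda eps1 eps2)
              ltac:(intros; unfold vf_s, T0; ring) ltac:(intros; unfold vf_i, T1; ring))
    as (s & i & Hs & Hi & rate_s & rate_i & Hsaddle); try nra.
  exists s, i; split; [| exact Hsaddle].
  assert (Hsum : lambda * (s + i) = T0 - T1) by lra.
  (* (eps2 - eps1) T2 = (eps2 - eps1) (T0 - T1) - lambda T1 and T1 < eps2 - eps1. *)
  assert (HT0T1 : T0 - T1 < lambda) by (unfold T0, T1 in *; nra).
  unfold interior_D1; repeat split; try assumption; nra.
Qed.
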